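(* Let $A$ be an abelian surface over $\mathbb{C}$ admitting two different principal polarizations $\theta \neq \theta' \in \mathrm{NS}(A)$. Then $A$ admits real multiplication.
   Context: An abelian surface $A$ over $\mathbb{C}$ admits real multiplication if the ring $\mathrm{End}_{\mathbb{Q}}(A) = \mathrm{End}(A) \otimes_{\mathbb{Z}} \mathbb{Q}$ contains a subring isomorphic to $\mathbb{Q}(\sqrt{d})$ for some integer $d \geq 2$ that is not a square. *)

From HB Require Import structures.
From mathcomp Require Import all_boot all_order all_algebra.
Set Implicit Arguments. Unset Strict Implicit. Unset Printing Implicit Defensive.
Import Order.TTheory GRing.Theory Num.Theory.
Local Open Scope ring_scope.

(* A complex 2-dimensional torus  V / Lambda  is modelled in lattice coordinates:
   Lambda = Z^4 (row vectors), V = Lambda (x) R = R^4, and the complex structure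
   of V (multiplication by i) is a real matrix J acting on row vectors, x |-> x *m J,
   with J^2 = -1.  R is an arbitrary real closed field (R = the real numbers is
   the case of the paper). *)

Definition complex_structure (R : rcfType) (J : 'M[R]_4) : Prop :=
  J *m J = - 1%:M.

Definition intmx (R : rcfType) (E : 'M[int]_4) : 'M[R]_4 := map_mx (fun z => z%:~R) E.
Definition ratmx (R : rcfType) (M : 'M[rat]_4) : 'M[R]_4 := map_mx (fun q => ratr q) M.

(* NS(A) (Appell-Humbert): integral alternating forms E(x,y) = x *m E *m y^T on
   Lambda which are invariant under the complex structure: E(xJ, yJ) = E(x, y). *)
Definition in_NS (R : rcfType) (J : 'M[R]_4) (E : 'M[int]_4) : Prop :=
  E^T = - E /\ J *m intmx R E *m J^T = intmx R E.

(* Polarization: the associated Hermitian form H(x,y) = E(ix,y) + i E(x,y) is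
   positive definite, i.e. E(xJ, x) > 0 for all nonzero real x. *)
Definition polarization (R : rcfType) (J : 'M[R]_4) (E : 'M[int]_4) : Prop :=
  in_NS J E /\
  forall x : 'rV[R]_4, x != 0 -> 0 < (x *m J *m intmx R E *m x^T) 0 0.

(* Principal polarization: the polarization has type (1,1), i.e. det E = 1. *)
Definition principal_polarization (R : rcfType) (J : 'M[R]_4) (E : 'M[int]_4) : Prop :=
  polarization J E /\ \det E = 1.

(* End_Q(A): rational matrices (endomorphisms of Lambda (x) Q) whose real
   extension is C-linear, i.e. commutes with J. *)
Definition in_EndQ (R : rcfType) (J : 'M[R]_4) (M : 'M[rat]_4) : Prop :=
  ratmx R M *m J = J *m ratmx R M.

(* Real multiplication: End_Q(A) contains a (unital) subring isomorphic to
   Q(sqrt d), d >= 2 not a square; such an embedding is the same as an element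
   M of End_Q(A) with M^2 = d (image of sqrt d). *)
Definition real_multiplication (R : rcfType) (J : 'M[R]_4) : Prop :=
  exists (d : nat) (M : 'M[rat]_4),
    (2 <= d)%N /\ (forall k : nat, (k * k)%N <> d) /\
    in_EndQ J M /\ M *m M = (d%:R)%:M.

From HB Require Import structures.
From mathcomp Require Import all_boot all_order all_algebra.
From mathcomp Require Import ring lra zify.
Set Implicit Arguments. Unset Strict Implicit. Unset Printing Implicit Defensive.
Import Order.TTheory GRing.Theory Num.Theory.
Local Open Scope ring_scope.

(** Write [X^#] for the Pfaffian adjugate of an alternating 4x4 matrix, so that
  [X X^# = X^# X = pf(X)].  For the principal polarizations [theta], [theta']
  (Pfaffians [+-1]) the matrix [phi = theta' theta^#] commutes with [J] and
  satisfies [phi^2 - b phi + pf(theta) pf(theta') = 0], where [b] is the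
  polarized Pfaffian.  Up to the sign [pf(theta)], [phi] maps the positive form
  [J theta] to the positive form [J theta'], hence is self-adjoint for it with
  positive eigenvalues; it is not scalar because [theta <> theta'], so both roots
  of its quadratic are positive and distinct: [pf(theta) pf(theta') = 1] and
  [b^2 > 4].  Then [2 phi - b] squares to [d = b^2 - 4], which lies strictly
  between [(|b| - 1)^2] and [|b|^2]. *)

Section Alternating4.
Variable T : comNzRingType.
Implicit Types (X Y : 'M[T]_4) (a b c d e f : T).

Definition alt4 a b c d e f : 'M[T]_4 :=
  \matrix_(i < 4, j < 4) nth 0 (nth [::] [:: [:: 0; a; b; c]; [:: -a; 0; d; e];
     [:: -b; -d; 0; f]; [:: -c; -e; -f; 0]] i) j.

Definition coef4 X (i j : nat) : T := X (inord i) (inord j).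

Definition alternating4 X : Prop :=
  X = alt4 (coef4 X 0 1) (coef4 X 0 2) (coef4 X 0 3)
           (coef4 X 1 2) (coef4 X 1 3) (coef4 X 2 3).

Definition pfaffian4 X : T :=
  coef4 X 0 1 * coef4 X 2 3 - coef4 X 0 2 * coef4 X 1 3 + coef4 X 0 3 * coef4 X 1 2.

Definition pf_adj X : 'M[T]_4 :=
  alt4 (- coef4 X 2 3) (coef4 X 1 3) (- coef4 X 1 2)
       (- coef4 X 0 3) (coef4 X 0 2) (- coef4 X 0 1).

Definition pf_polar X Y : T := pfaffian4 (X + Y) - pfaffian4 X - pfaffian4 Y.

Lemma coef4_alt4 a b c d e f i j : (i < 4)%N -> (j < 4)%N ->
  coef4 (alt4 a b c d e f) i j = nth 0 (nth [::] [:: [:: 0; a; b; c]; [:: -a; 0; d; e];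
     [:: -b; -d; 0; f]; [:: -c; -e; -f; 0]] i) j.
Proof. by move=> i4 j4; rewrite /coef4 mxE !inordK. Qed.

Ltac entrywise := apply/matrixP => -[[|[|[|[|i]]]] ?] // [[|[|[|[|j]]]] ?] //;
  rewrite !mxE ?big_ord_recl ?big_ord0 ?mxE /=; ring.

Lemma alternating4D X Y : alternating4 X -> alternating4 Y -> alternating4 (X + Y).
Proof.
have coefD Z W i j : coef4 (Z + W) i j = coef4 Z i j + coef4 W i j.
  by rewrite /coef4 mxE.
move=> -> ->; rewrite /alternating4 !coefD !coef4_alt4 //=; entrywise.
Qed.

Lemma pf_adjD X Y : pf_adj (X + Y) = pf_adj X + pf_adj Y.
Proof. rewrite /pf_adj /coef4; entrywise. Qed.

Lemma pf_adjZ k X : pf_adj (k *: X) = k *: pf_adj X.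
Proof. rewrite /pf_adj /coef4; entrywise. Qed.

Lemma pf_adjK X : alternating4 X -> pf_adj (pf_adj X) = X.
Proof. move=> ->; rewrite /pf_adj !coef4_alt4 //=; entrywise. Qed.

Lemma mul_pf_adj X : alternating4 X -> X *m pf_adj X = (pfaffian4 X)%:M.
Proof. move=> ->; rewrite /pf_adj /pfaffian4 !coef4_alt4 //=; entrywise. Qed.

Lemma pf_adj_mul X : alternating4 X -> pf_adj X *m X = (pfaffian4 X)%:M.
Proof. move=> ->; rewrite /pf_adj /pfaffian4 !coef4_alt4 //=; entrywise. Qed.

Lemma pf_adj_mul_polar X Y : alternating4 X -> alternating4 Y ->
  pf_adj X *m Y + pf_adj Y *m X = (pf_polar X Y)%:M.
Proof.
move=> aX aY; have := pf_adj_mul (alternating4D aX aY).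
rewrite pf_adjD mulmxDl !mulmxDr (pf_adj_mul aX) (pf_adj_mul aY) => hXY.
apply/matrixP => i j; move/matrixP/(_ i j): hXY; rewrite !mxE !mulrnBl => <-.
ring.
Qed.

Definition pf_ratio X Y : 'M[T]_4 := Y *m pf_adj X.

Lemma pf_ratio_quadratic X Y : alternating4 X -> alternating4 Y ->
  pf_ratio X Y *m pf_ratio X Y =
  pf_polar X Y *: pf_ratio X Y - (pfaffian4 X * pfaffian4 Y)%:M.
Proof.
move=> aX aY; rewrite /pf_ratio.
have adjXY : pf_adj X *m Y = (pf_polar X Y)%:M - pf_adj Y *m X.
  by rewrite -(pf_adj_mul_polar aX aY) addrK.
rewrite -mulmxA (mulmxA (pf_adj X)) adjXY mulmxBl mul_scalar_mx mulmxBr scalemxAr.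
by rewrite !mulmxA (mul_pf_adj aY) mul_scalar_mx -scalemxAl (mul_pf_adj aX)
  scale_scalar_mx mulrC.
Qed.

End Alternating4.

Lemma pf_adj_invmx (T : comUnitRingType) (X : 'M[T]_4) :
  alternating4 X -> X \in unitmx -> pf_adj X = pfaffian4 X *: invmx X.
Proof.
move=> aX uX.
by rewrite -[pf_adj X]mul1mx -(mulVmx uX) -mulmxA (mul_pf_adj aX) mul_mx_scalar.
Qed.

Lemma pfaffian4_unit (T : comUnitRingType) (X : 'M[T]_4) :
  alternating4 X -> X \in unitmx -> pfaffian4 X \is a GRing.unit.
Proof.
move=> aX uX.
have X_pf : X = pfaffian4 X *: pf_adj (invmx X).
  by rewrite -pf_adjZ -pf_adj_invmx ?pf_adjK.
by move: uX; rewrite unitmxE {1}X_pf detZ unitrM unitrX_pos => // /andP[].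
Qed.

Lemma alternating4_skew (X : 'M[int]_4) : X^T = - X -> alternating4 X.
Proof.
move=> skewX; have Xji i j : X j i = - X i j.
  by move/matrixP/(_ i j): skewX; rewrite !mxE.
have Xii i : X i i = 0 by have := Xji i i; lia.
have ordE k (k4 : (k < 4)%N) : Ordinal k4 = inord k.
  by apply: val_inj; rewrite /= inordK.
apply/matrixP => -[[|[|[|[|i]]]] ?] // [[|[|[|[|j]]]] ?] //;
  rewrite mxE /coef4 /= !ordE ?Xii // Xji.
Qed.

Lemma pfaffian4_sqr_int (X : 'M[int]_4) :
  X^T = - X -> \det X = 1 -> pfaffian4 X ^+ 2 = 1.
Proof.
move=> skewX detX.
have : pfaffian4 X \is a GRing.unit.
  apply: pfaffian4_unit; first exact: alternating4_skew.
  by rewrite unitmxE detX unitr1.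
by case/orP=> /eqP ->.
Qed.

Lemma mx_complete_square (T : comNzRingType) n (P : 'M[T]_n) t c :
  P *m P = t *: P - c%:M ->
  (2%:R *: P - t%:M) *m (2%:R *: P - t%:M) = (t ^+ 2 - 4%:R * c)%:M.
Proof.
move=> PP; rewrite mulmxBl !mulmxBr -!scalemxAl -!scalemxAr PP.
rewrite !mul_mx_scalar !mul_scalar_mx.
by apply/matrixP => i j; rewrite !mxE; ring.
Qed.

Lemma exists_row_not_eigen (T : comNzRingType) n (P : 'M[T]_n) l :
  P != l%:M -> exists x : 'rV_n, x *m P != l *: x.
Proof.
move=> /eqP Pl.
have [/forallP eigP | /forallPn[i]] := boolP [forall i, 'e_i *m P == l *: ('e_i : 'rV_n)].
  by case: Pl; apply/row_matrixP => i; rewrite !rowE (eqP (eigP i)) mul_mx_scalar.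
by exists 'e_i.
Qed.

Section PositivePencil.
Variables (R : rcfType) (n : nat) (K K' P : 'M[R]_n) (t c : R).

Definition pos_def (M : 'M[R]_n) : Prop :=
  forall x : 'rV_n, x != 0 -> 0 < (x *m M *m x^T) 0 0.

Hypotheses (symK : K^T = K) (symK' : K'^T = K') (posK : pos_def K) (posK' : pos_def K').
Hypotheses (PK : P *m K = K') (PP : P *m P = t *: P - c%:M).
Hypothesis P_nonscalar : forall l, P != l%:M.

Lemma pencil_self_adjoint l : (P - l%:M) *m K = K *m (P - l%:M)^T.
Proof.
have adjP : P *m K = K *m P^T by rewrite -{2}symK -trmx_mul PK symK'.
by rewrite linearB /= tr_scalar_mx mulmxBl mulmxBr adjP mul_scalar_mx mul_mx_scalar.
Qed.

Lemma pencil_discr_gt0 : 4%:R * c < t ^+ 2.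
Proof.
(* [Q := P - t/2] is self-adjoint for [K] and [Q^2 = t^2/4 - c], so for [u = x Q]
   the form gives [u K u^T = (t^2/4 - c) x K x^T]. *)
pose s := t / 2%:R; have [x xP] := exists_row_not_eigen (P_nonscalar s).
have x0 : x != 0 by apply: contraNneq xP => ->; rewrite mul0mx scaler0.
have u0 : x *m (P - s%:M) != 0 by rewrite mulmxBr mul_mx_scalar subr_eq0.
have QQ : (P - s%:M) *m (P - s%:M) = (s ^+ 2 - c)%:M.
  rewrite mulmxBl !mulmxBr PP !mul_mx_scalar mul_scalar_mx scale_scalar_mx.
  by apply/matrixP => i j; rewrite !mxE /s; field.
have := posK u0; rewrite trmx_mul !mulmxA -(mulmxA _ K) -pencil_self_adjoint.
rewrite !mulmxA -(mulmxA x) QQ mul_mx_scalar -!scalemxAl mxE.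
rewrite pmulr_lgt0 ?posK // /s subr_gt0; lra.
Qed.

Lemma pencil_root_gt0 l : l ^+ 2 - t * l + c = 0 -> 0 < l.
Proof.
(* [x (P - (t - l))] is an eigenvector of [P] for [l], on which [K' = P K] is positive. *)
move=> root_l; have [x xP] := exists_row_not_eigen (P_nonscalar (t - l)).
have v0 : x *m (P - (t - l)%:M) != 0 by rewrite mulmxBr mul_mx_scalar subr_eq0.
have eigv : (P - (t - l)%:M) *m P = l *: (P - (t - l)%:M).
  have cE : c = t * l - l ^+ 2 by apply/eqP; rewrite -subr_eq0 -root_l; apply/eqP; ring.
  rewrite mulmxBl PP mul_scalar_mx cE.
  by apply/matrixP => i j; rewrite !mxE; ring.
have := posK' v0; rewrite -PK !mulmxA -(mulmxA x) eigv -scalemxAr -!scalemxAl mxE.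
by rewrite pmulr_lgt0 // posK.
Qed.

Lemma pencil_const_gt0 : 0 < c.
Proof.
have discr_ge0 : 0 <= t ^+ 2 - 4%:R * c by rewrite subr_ge0 ltW // pencil_discr_gt0.
pose r := Num.sqrt (t ^+ 2 - 4%:R * c).
have r2 : r ^+ 2 = t ^+ 2 - 4%:R * c := sqr_sqrtr discr_ge0.
have cE : c = (t ^+ 2 - r ^+ 2) / 4%:R by rewrite r2; field.
have root_gt0 s : s ^+ 2 = r ^+ 2 -> 0 < (t + s) / 2%:R.
  by move=> s2; apply: pencil_root_gt0; rewrite cE -s2; field.
have -> : c = (t + r) / 2%:R * ((t + - r) / 2%:R) by rewrite cE; field.
by rewrite mulr_gt0 ?root_gt0 ?sqrrN.
Qed.

End PositivePencil.

Lemma mulmx_inv_anticomm (F : fieldType) n (J E D : 'M[F]_n) p : p != 0 ->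
  E *m D = p%:M -> D *m E = p%:M -> E *m J^T = - (J *m E) -> D *m J = - (J^T *m D).
Proof.
move=> p0 ED DE EJ; apply: (scalerI p0).
rewrite scalerN -mul_mx_scalar -ED -mul_scalar_mx -DE.
by rewrite mulmxA -(mulmxA D J) -[J *m E]opprK -EJ mulmxN mulNmx !mulmxA.
Qed.

Section ComplexStructure.
Variables (R : rcfType) (J : 'M[R]_4).
Hypothesis J2 : complex_structure J.

Lemma intmxE (X : 'M[int]_4) : intmx R X = map_mx intr X.
Proof. by []. Qed.

Lemma NS_mul_trJ (E : 'M[R]_4) : J *m E *m J^T = E -> E *m J^T = - (J *m E).
Proof. by move=> invE; rewrite -{2}invE !mulmxA J2 !mulNmx mul1mx opprK. Qed.

Lemma NS_sym (X : 'M[int]_4) : in_NS J X -> (J *m intmx R X)^T = J *m intmx R X.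
Proof.
move=> [skewX invX]; rewrite trmx_mul intmxE map_trmx skewX map_mxN mulNmx.
by rewrite -intmxE NS_mul_trJ ?opprK.
Qed.

Lemma polarization_pos_def (X : 'M[int]_4) : polarization J X -> pos_def (J *m intmx R X).
Proof. by move=> [_ posX] x x0; rewrite mulmxA; apply: posX. Qed.

Lemma pf_ratio_commJ (X X' : 'M[int]_4) : in_NS J X -> in_NS J X' -> pfaffian4 X != 0 ->
  intmx R (pf_ratio X X') *m J = J *m intmx R (pf_ratio X X').
Proof.
move=> [skewX invX] [_ invX'] pX0.
have aX := alternating4_skew skewX.
have p0 : (pfaffian4 X)%:~R != 0 :> R by rewrite intr_eq0.
have XD : intmx R X *m intmx R (pf_adj X) = (pfaffian4 X)%:~R%:M.
  by rewrite !intmxE -map_mxM mul_pf_adj // map_scalar_mx.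
have DX : intmx R (pf_adj X) *m intmx R X = (pfaffian4 X)%:~R%:M.
  by rewrite !intmxE -map_mxM pf_adj_mul // map_scalar_mx.
have DJ := mulmx_inv_anticomm p0 XD DX (NS_mul_trJ invX).
rewrite /pf_ratio intmxE map_mxM -!intmxE -mulmxA DJ mulmxN mulmxA (NS_mul_trJ invX').
by rewrite mulNmx opprK mulmxA.
Qed.

Lemma principal_scaled_eq (X X' : 'M[int]_4) l :
  principal_polarization J X -> principal_polarization J X' ->
  intmx R X' = l *: intmx R X -> X' = X.
Proof.
move=> [[_ posX] detX] [[_ posX'] detX'] X'E.
have e0 : (delta_mx 0 0 : 'rV[R]_4) != 0.
  by apply/eqP => /matrixP/(_ 0 0); rewrite !mxE /= => /eqP; rewrite oner_eq0.
have l_gt0 : 0 < l.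
  move/(_ _ e0): posX'; rewrite X'E -scalemxAr -scalemxAl mxE.
  by rewrite pmulr_lgt0 // posX.
have l1 : l = 1.
  have := congr1 determinant X'E; rewrite detZ !intmxE !det_map_mx detX detX'.
  by rewrite rmorph1 mulr1 => /esym/eqP; rewrite pexpr_eq1 ?ltW // => /eqP.
apply/matrixP => i j; move/matrixP/(_ i j): X'E; rewrite l1 scale1r !mxE => /eqP.
by rewrite eqr_int => /eqP.
Qed.

Lemma principal_pf_ratio_discr (X X' : 'M[int]_4) :
  principal_polarization J X -> principal_polarization J X' ->
  X <> X' -> pfaffian4 X * pfaffian4 X' = 1 /\ 4 < pf_polar X X' ^+ 2.
Proof.
move=> polX polX' neq; have [[NSX _] detX] := polX; have [[NSX' _] detX'] := polX'.
have aX := alternating4_skew NSX.1; have aX' := alternating4_skew NSX'.1.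
have p2 := pfaffian4_sqr_int NSX.1 detX; have p'2 := pfaffian4_sqr_int NSX'.1 detX'.
set p := pfaffian4 X in p2 *; set p' := pfaffian4 X' in p'2 *; set b := pf_polar X X'.
have p0 : p != 0 by rewrite -sqrf_eq0 p2 oner_neq0.
have pp : (p%:~R * p%:~R : R) = 1 by rewrite -intrM -expr2 p2.
pose P : 'M[R]_4 := p%:~R *: intmx R (pf_ratio X X').
have PX : P *m intmx R X = intmx R X'.
  rewrite -scalemxAl !intmxE -map_mxM /pf_ratio -mulmxA (pf_adj_mul aX).
  by rewrite mul_mx_scalar map_mxZ scalerA pp scale1r.
have PK : P *m (J *m intmx R X) = J *m intmx R X'.
  rewrite mulmxA /P -scalemxAl (pf_ratio_commJ NSX NSX' p0).
  by rewrite scalemxAr -mulmxA PX.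
have PP : P *m P = (p * b)%:~R *: P - (p * p')%:~R%:M.
  rewrite /P -scalemxAl -scalemxAr [LHS]scalerA pp scale1r !intmxE -map_mxM.
  rewrite (pf_ratio_quadratic aX aX') map_mxB map_mxZ map_scalar_mx scalerA intrM.
  by rewrite mulrAC pp mul1r.
have P_nonscalar l : P != l%:M.
  apply/eqP => Pl; apply/neq/esym/(principal_scaled_eq polX polX' (l := l)).
  by rewrite -PX Pl mul_scalar_mx.
have posK := polarization_pos_def polX.1; have posK' := polarization_pos_def polX'.1.
have symK := NS_sym NSX; have symK' := NS_sym NSX'.
have := pencil_const_gt0 symK symK' posK posK' PK PP P_nonscalar.
rewrite ltr0z => pp'_gt0.
have pp' : p * p' = 1 by apply/eqP; rewrite -sqrp_eq1 ?ltW // exprMn p2 p'2 mulr1.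
have := pencil_discr_gt0 symK symK' posK PK PP P_nonscalar.
by rewrite pp' mulr1 -rmorphXn exprMn p2 mul1r -[4%:R]/(4%:~R) ltr_int.
Qed.

End ComplexStructure.

Lemma sqr_neq_sqrB4 n : (3 <= n)%N -> forall k, (k * k)%N <> (n ^ 2 - 4)%N.
Proof.
move=> n3 k kk; have [nk | kn] := leqP n k.
  by have := leq_mul nk nk; nia.
by have := leq_mul kn kn; nia.
Qed.

Lemma ratmx_int (R : rcfType) (X : 'M[int]_4) : ratmx R (map_mx intr X) = intmx R X.
Proof. by apply/matrixP => i j; rewrite !mxE ratr_int. Qed.

Theorem lemma2 (R : rcfType) (J : 'M[R]_4) (theta theta' : 'M[int]_4) :
  complex_structure J ->
  principal_polarization J theta ->
  principal_polarization J theta' ->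
  theta <> theta' ->
  real_multiplication J.
Proof.
move=> J2 pol pol' neq.
have [pp' b4] := principal_pf_ratio_discr J2 pol pol' neq.
have [[NS _] _] := pol; have [[NS' _] _] := pol'.
set b := pf_polar theta theta' in b4 *.
set M := 2%:R *: pf_ratio theta theta' - b%:M.
have b3 : (3 <= `|b|)%N by nia.
exists (`|b| ^ 2 - 4)%N, (map_mx intr M).
split; [lia | split; [exact: sqr_neq_sqrB4 | split]].
- have pf0 : pfaffian4 theta != 0 by apply: contraPneq pp' => ->; rewrite mul0r.
  rewrite /in_EndQ ratmx_int !intmxE map_mxB map_mxZ map_scalar_mx -intmxE.
  rewrite mulmxBl mulmxBr -scalemxAl -scalemxAr (pf_ratio_commJ J2 NS NS' pf0).
  by rewrite mul_scalar_mx mul_mx_scalar.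
- have quad := pf_ratio_quadratic (alternating4_skew NS.1) (alternating4_skew NS'.1).
  rewrite -map_mxM (mx_complete_square quad) pp' map_scalar_mx; congr (_%:M).
  have -> : ((`|b| ^ 2 - 4)%N%:R : rat) = ((`|b| ^ 2 - 4)%N%:Z)%:~R by [].
  by congr (_%:~R); lia.
Qed.
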